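(* For the full-order LQO system $G$ and the reduced-order LQO system $G_k$ described in the context, the squared frequency-limited $\mathcal{H}_2$ norm of the error satisfies $$\|G-G_k\|_{\mathcal{H}_{2,\omega}}^2=\|G\|_{\mathcal{H}_{2,\omega}}^2-2\langle G,G_k\rangle_{\mathcal{H}_{2,\omega}}+\|G_k\|_{\mathcal{H}_{2,\omega}}^2,$$ where the $\mathcal{H}_{2,\omega}$ inner product equals $\langle G,G_k\rangle_{\mathcal{H}_{2,\omega}}=\operatorname{trace}\big(B^T(Y_{12,\omega}+Z_{12,\omega})B_k\big)=\operatorname{trace}(B^TQ_{12,\omega}B_k)$.
   Context: Consider the linear quadratic output (LQO) system $G$: $\dot x(t)=Ax(t)+Bu(t)$, $y(t)=Cx(t)+[x(t)^TM_1x(t);\dots;x(t)^TM_px(t)]$ with $A\in\mathbb{R}^{n\times n}$ Hurwitz, $B\in\mathbb{R}^{n\times m}$, $C\in\mathbb{R}^{p\times n}$, $M_i=M_i^T\in\mathbb{R}^{n\times n}$, and a reduced-order LQO system $G_k$ with realization $(A_k,B_k,C_k,M_{k,1},\dots,M_{k,p})$ of order $k$, $A_k$ Hurwitz. Their transfer functions are $G_1(s)=C(sI-A)^{-1}B$, $G_{2,i}(s_1,s_2)=B^T(s_1I-A)^{-*}M_i(s_2I-A)^{-1}B$, and analogously $G_{k,1}$, $G_{k,2,i}$ with the reduced matrices. The frequency-limited $\mathcal{H}_2$ norm on $[0,\omega]$ rad/sec is given by $\|G\|_{\mathcal{H}_{2,\omega}}^2=\operatorname{trace}\Big(\frac{1}{2\pi}\int_{-\omega}^{\omega}G_1^*(j\nu)G_1(j\nu)d\nu+\frac{1}{(2\pi)^2}\int_{-\omega}^{\omega}\int_{-\omega}^{\omega}\sum_{i=1}^pG_{2,i}^*(j\nu_1,j\nu_2)G_{2,i}(j\nu_1,j\nu_2)d\nu_1d\nu_2\Big)$,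 and the $\mathcal{H}_{2,\omega}$ inner product is $\langle G,G_k\rangle_{\mathcal{H}_{2,\omega}}=\frac{1}{2\pi}\int_{-\omega}^{\omega}\operatorname{trace}\big(G_1^*(j\nu)G_{k,1}(j\nu)\big)d\nu+\frac{1}{4\pi^2}\operatorname{trace}\Big(\int_{-\omega}^{\omega}\int_{-\omega}^{\omega}\sum_{i=1}^pG_{2,i}^*(j\nu_1,j\nu_2)G_{k,2,i}(j\nu_1,j\nu_2)d\nu_1d\nu_2\Big)$. Let $F_\omega=\frac{1}{2\pi}\int_{-\omega}^{\omega}(j\nu I-A)^{-1}d\nu$ and $F_{k,\omega}=\frac{1}{2\pi}\int_{-\omega}^{\omega}(j\nu I-A_k)^{-1}d\nu$. Let $P_{12,\omega}$ solve $AP_{12,\omega}+P_{12,\omega}A_k^T+F_\omega BB_k^T+BB_k^TF_{k,\omega}^*=0$, $Y_{12,\omega}$ solve $A^TY_{12,\omega}+Y_{12,\omega}A_k+F_\omega^*C^TC_k+C^TC_kF_{k,\omega}=0$, $Z_{12,\omega}$ solve $A^TZ_{12,\omega}+Z_{12,\omega}A_k+\sum_{i=1}^p(F_\omega^*M_iP_{12,\omega}M_{k,i}+M_iP_{12,\omega}M_{k,i}F_{k,\omega})=0$, and $Q_{12,\omega}=Y_{12,\omega}+Z_{12,\omega}$. Equivalently $Y_{12,\omega}=\frac{1}{2\pi}\int_{-\omega}^{\omega}(j\nu I-A)^{-*}C^TC_k(j\nu I-A_k)^{-1}d\nu$ and $Z_{12,\omega}$ is the analogous double integral involving $\sum_i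 M_i(\cdot)M_{k,i}$. *)

From HB Require Import structures.
From mathcomp Require Import all_boot all_order all_algebra.
From mathcomp Require Import all_classical all_reals all_analysis.
From mathcomp Require Import complex.

Set Implicit Arguments.
Unset Strict Implicit.
Unset Printing Implicit Defensive.

Import Order.TTheory GRing.Theory Num.Theory.
Local Open Scope ring_scope.
Local Open Scope complex_scope.
Local Open Scope classical_set_scope.

Section LQO.
Variable R : realType.
Local Notation C := (R[i]).

Definition cmx (a b : nat) (A : 'M[R]_(a, b)) : 'M[C]_(a, b) :=
  map_mx (fun x : R => x%:C) A.

Definition ctr (a b : nat) (M : 'M[C]_(a, b)) : 'M[C]_(b, a) :=
  map_mx conjc M^T.

Definition jw (nu : R) : C := Complex 0 nu.

Definition resolvent (a : nat) (A : 'M[R]_a) (s : C) : 'M[C]_a :=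
  invmx (s%:M - cmx A).

Definition cintegral (w : R) (f : R -> C) : C :=
  (Rintegral lebesgue_measure `[- w, w]%classic (fun x => complex.Re (f x)))%:C
  + 'i * (Rintegral lebesgue_measure `[- w, w]%classic (fun x => complex.Im (f x)))%:C.

Definition cintegral2 (w : R) (f : R -> R -> C) : C :=
  cintegral w (fun x1 => cintegral w (fun x2 => f x1 x2)).

Definition mxintegral (w : R) (a b : nat) (F : R -> 'M[C]_(a, b)) : 'M[C]_(a, b) :=
  \matrix_(i, j) cintegral w (fun x => F x i j).

Definition mxintegral2 (w : R) (a b : nat) (F : R -> R -> 'M[C]_(a, b))
  : 'M[C]_(a, b) :=
  \matrix_(i, j) cintegral2 w (fun x1 x2 => F x1 x2 i j).

Definition hurwitz (a : nat) (A : 'M[R]_a) : Prop :=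
  forall l : C, eigenvalue (cmx A) l -> complex.Re l < 0.

Definition tf1 (a m p : nat) (A : 'M[R]_a) (B : 'M[R]_(a, m)) (Cm : 'M[R]_(p, a))
  (s : C) : 'M[C]_(p, m) :=
  cmx Cm *m resolvent A s *m cmx B.

Definition tf2 (a m p : nat) (A : 'M[R]_a) (B : 'M[R]_(a, m)) (M : 'I_p -> 'M[R]_a)
  (i : 'I_p) (s1 s2 : C) : 'M[C]_m :=
  cmx B^T *m ctr (resolvent A s1) *m cmx (M i) *m resolvent A s2 *m cmx B.

(** Squared frequency-limited H2 norm, expressed on the transfer functions
    evaluated on the imaginary axis: H1 nu = G_1(j nu),
    H2 i nu1 nu2 = G_{2,i}(j nu1, j nu2). *)
Definition h2w_norm2 (w : R) (m p : nat) (H1 : R -> 'M[C]_(p, m))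
  (H2 : 'I_p -> R -> R -> 'M[C]_m) : C :=
  \tr ( ((2 * pi)^-1)%:C *: mxintegral w (fun nu => ctr (H1 nu) *m H1 nu)
      + (((2 * pi) ^+ 2)^-1)%:C *:
          mxintegral2 w (fun nu1 nu2 =>
             \sum_(i < p) ctr (H2 i nu1 nu2) *m H2 i nu1 nu2)).

Definition h2w_inner (w : R) (m p : nat)
  (H1 K1 : R -> 'M[C]_(p, m)) (H2 K2 : 'I_p -> R -> R -> 'M[C]_m) : C :=
  ((2 * pi)^-1)%:C * cintegral w (fun nu => \tr (ctr (H1 nu) *m K1 nu))
  + (((2 * pi) ^+ 2)^-1)%:C *
      \tr (mxintegral2 w (fun nu1 nu2 =>
             \sum_(i < p) ctr (H2 i nu1 nu2) *m K2 i nu1 nu2)).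

Definition Fw (w : R) (a : nat) (A : 'M[R]_a) : 'M[C]_a :=
  ((2 * pi)^-1)%:C *: mxintegral w (fun nu => resolvent A (jw nu)).

End LQO.

(* Expanding the square gives
     ||G - G_k||^2 = ||G||^2 - <G, G_k> - conj <G, G_k> + ||G_k||^2,
   so it suffices to compute <G, G_k> and to show that it is real.
   On the imaginary axis the resolvents satisfy A R_A(j nu) = j nu R_A(j nu) - I,
   hence W(nu) = R_A(j nu)^* X R_Ak(j nu) satisfies
     A^T W + W A_k = - (R_A(j nu)^* X + X R_Ak(j nu)),
   and integrating over [-w, w] shows that (1/2pi) int W solves the Sylvester
   equation defining Y_12 (with X = C^T C_k) and Z_12; dually for P_12. As A and
   A_k are Hurwitz, these Sylvester equations have unique solutions, so Y_12, Z_12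
   and P_12 are these integrals. The linear part of <G, G_k> is then
   tr (B^T Y_12 B_k). In the quadratic part only the middle factor
   R_A(j nu1) B B_k^T R_Ak(j nu1)^* depends on nu1; it integrates to 2pi P_12 and
   leaves tr (B^T Z_12 B_k). Finally nu |-> -nu conjugates the resolvent, so F_w
   is real, hence so are P_12, Y_12, Z_12 and the inner product. *)

From HB Require Import structures.
From mathcomp Require Import all_boot all_order all_algebra.
From mathcomp Require Import all_classical all_reals all_analysis.
From mathcomp Require Import complex ring.

Set Implicit Arguments.
Unset Strict Implicit.
Unset Printing Implicit Defensive.

Import Order.TTheory GRing.Theory Num.Theory.
Import numFieldNormedType.Exports.
Local Open Scope ring_scope.
Local Open Scope complex_scope.

(* [Num.Theory] exports its own [Re] and [Im]. *)
Local Notation Re := complex.Re.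
Local Notation Im := complex.Im.

Section ComplexContinuity.
Variable R : realType.
Local Notation C := R[i].
Implicit Types (u v : R -> R) (f g : R -> C).

Lemma Re_addc (a b : C) : Re (a + b) = Re a + Re b. Proof. by case: a; case: b. Qed.
Lemma Im_addc (a b : C) : Im (a + b) = Im a + Im b. Proof. by case: a; case: b. Qed.
Lemma Re_oppc (a : C) : Re (- a) = - Re a. Proof. by case: a. Qed.
Lemma Im_oppc (a : C) : Im (- a) = - Im a. Proof. by case: a. Qed.
Lemma Re_mulc (a b : C) : Re (a * b) = Re a * Re b - Im a * Im b.
Proof. by case: a => ? ?; case: b. Qed.
Lemma Im_mulc (a b : C) : Im (a * b) = Re a * Im b + Im a * Re b.
Proof. by case: a => ? ?; case: b. Qed.
Lemma Re_invc (a : C) : Re a^-1 = Re a / (Re a ^+ 2 + Im a ^+ 2). Proof. by case: a. Qed.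
Lemma Im_invc (a : C) : Im a^-1 = - (Im a / (Re a ^+ 2 + Im a ^+ 2)). Proof. by case: a. Qed.
Lemma Re_conjc (a : C) : Re (conjc a) = Re a. Proof. by case: a. Qed.
Lemma Im_conjc (a : C) : Im (conjc a) = - Im a. Proof. by case: a. Qed.

Lemma eq_continuous_fun u v : u =1 v -> continuous u -> continuous v.
Proof. by move=> /funext->. Qed.

Definition ccontinuous f :=
  continuous (fun x => Re (f x)) /\ continuous (fun x => Im (f x)).

Lemma eq_ccontinuous f g : f =1 g -> ccontinuous f -> ccontinuous g.
Proof. by move=> /funext->. Qed.

Lemma ccontinuous_cst (c : C) : ccontinuous (fun=> c).
Proof. by split; apply: cst_continuous. Qed.

Lemma ccontinuous_jw : ccontinuous (@jw R).
Proof. by split => x /=; [exact: cst_continuous | exact: cvg_id]. Qed.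

Lemma ccontinuousD f g : ccontinuous f -> ccontinuous g -> ccontinuous (fun x => f x + g x).
Proof.
move=> [fRe fIm] [gRe gIm]; split.
- apply: (@eq_continuous_fun (fun x => Re (f x) + Re (g x))) => [x|x].
    by rewrite Re_addc.
  exact: (continuousD (fRe x) (gRe x)).
- apply: (@eq_continuous_fun (fun x => Im (f x) + Im (g x))) => [x|x].
    by rewrite Im_addc.
  exact: (continuousD (fIm x) (gIm x)).
Qed.

Lemma ccontinuousN f : ccontinuous f -> ccontinuous (fun x => - f x).
Proof.
move=> [fRe fIm]; split.
- apply: (@eq_continuous_fun (fun x => - Re (f x))) => [x|x]; first by rewrite Re_oppc.
  exact: (continuousN (fRe x)).
- apply: (@eq_continuous_fun (fun x => - Im (f x))) => [x|x]; first by rewrite Im_oppc.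
  exact: (continuousN (fIm x)).
Qed.

Lemma ccontinuousM f g : ccontinuous f -> ccontinuous g -> ccontinuous (fun x => f x * g x).
Proof.
move=> [fRe fIm] [gRe gIm]; split.
- apply: (@eq_continuous_fun
    (fun x => Re (f x) * Re (g x) - Im (f x) * Im (g x))) => [x|x].
    by rewrite Re_mulc.
  exact: (continuousB (continuousM (fRe x) (gRe x)) (continuousM (fIm x) (gIm x))).
- apply: (@eq_continuous_fun
    (fun x => Re (f x) * Im (g x) + Im (f x) * Re (g x))) => [x|x].
    by rewrite Im_mulc.
  exact: (continuousD (continuousM (fRe x) (gIm x)) (continuousM (fIm x) (gRe x))).
Qed.

Lemma ccontinuousJ f : ccontinuous f -> ccontinuous (fun x => conjc (f x)).
Proof.
move=> [fRe fIm]; split.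
- by apply: (@eq_continuous_fun (fun x => Re (f x))) => // x; rewrite Re_conjc.
- apply: (@eq_continuous_fun (fun x => - Im (f x))) => [x|x]; first by rewrite Im_conjc.
  exact: (continuousN (fIm x)).
Qed.

Lemma ccontinuousV f : (forall x, f x != 0) -> ccontinuous f ->
  ccontinuous (fun x => (f x)^-1).
Proof.
move=> f_neq0 [fRe fIm].
pose d x := Re (f x) ^+ 2 + Im (f x) ^+ 2.
have d_neq0 x : d x != 0.
  apply: contra (f_neq0 x); rewrite /d; case: (f x) => a b /= /eqP ab0.
  have a0 : a = 0 by apply/eqP; rewrite -sqrf_eq0 eq_le sqr_ge0 andbT -ab0 lerDl sqr_ge0.
  have b0 : b = 0 by apply/eqP; rewrite -sqrf_eq0 -ab0 a0 expr0n add0r.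
  by rewrite a0 b0.
have dV x : {for x, continuous (fun x => (d x)^-1)}.
  by apply: continuousV (d_neq0 x) _; exact: (continuousD (continuousM (fRe x) (fRe x))
                                                      (continuousM (fIm x) (fIm x))).
split.
- apply: (@eq_continuous_fun (fun x => Re (f x) * (d x)^-1)) => [x|x]; first by rewrite Re_invc.
  exact: (continuousM (fRe x) (dV x)).
- apply: (@eq_continuous_fun (fun x => - (Im (f x) * (d x)^-1))) => [x|x]; first by rewrite Im_invc.
  exact: (continuousN (continuousM (fIm x) (dV x))).
Qed.

Lemma ccontinuous_sum I (r : seq I) (P : pred I) (F : I -> R -> C) :
  (forall i, P i -> ccontinuous (F i)) ->
  ccontinuous (fun x => \sum_(i <- r | P i) F i x).
Proof.
move=> FP; elim: r => [|a r IHr].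
  by apply: (@eq_ccontinuous (fun=> 0)) => [x|]; [rewrite big_nil | exact: ccontinuous_cst].
apply: (@eq_ccontinuous (fun x => (if P a then F a x else 0) + \sum_(i <- r | P i) F i x)).
  by move=> x; rewrite big_cons; case: (P a); rewrite ?add0r.
apply: (ccontinuousD _ IHr); case Pa: (P a); [exact: FP | exact: ccontinuous_cst].
Qed.

Lemma ccontinuous_prod I (r : seq I) (P : pred I) (F : I -> R -> C) :
  (forall i, P i -> ccontinuous (F i)) ->
  ccontinuous (fun x => \prod_(i <- r | P i) F i x).
Proof.
move=> FP; elim: r => [|a r IHr].
  by apply: (@eq_ccontinuous (fun=> 1)) => [x|]; [rewrite big_nil | exact: ccontinuous_cst].
apply: (@eq_ccontinuous (fun x => (if P a then F a x else 1) * \prod_(i <- r | P i) F i x)).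
  by move=> x; rewrite big_cons; case: (P a); rewrite ?mul1r.
apply: (ccontinuousM _ IHr); case Pa: (P a); [exact: FP | exact: ccontinuous_cst].
Qed.

End ComplexContinuity.

Section SegmentIntegral.
Variables (R : realType) (w : R).
Local Notation C := R[i].
Local Notation RI u := (Rintegral lebesgue_measure `[- w, w]%classic u).
Implicit Types (u v : R -> R) (f g : R -> C).

Lemma integrable_segment u : continuous u ->
  lebesgue_measure.-integrable `[- w, w]%classic (EFin \o u).
Proof.
move=> cu; apply: continuous_compact_integrable; first exact: segment_compact.
exact: continuous_subspaceT.
Qed.

Lemma Rintegral_segmentZl (a : R) u : continuous u -> RI (fun x => a * u x) = a * RI u.
Proof. by move=> cu; rewrite RintegralZl //; exact: integrable_segment. Qed.

Lemma Rintegral_segmentDZ (a b : R) u v : continuous u -> continuous v ->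
  RI (fun x => a * u x + b * v x) = a * RI u + b * RI v.
Proof.
move=> cu cv; have cZ (c : R) (z : R -> R) : continuous z -> continuous (fun x => c * z x).
  by move=> cz x; apply: (continuousM _ (cz x)); exact: cst_continuous.
by rewrite RintegralD ?Rintegral_segmentZl //; apply: integrable_segment; exact: cZ.
Qed.

Lemma Rintegral_segmentD u v : continuous u -> continuous v ->
  RI (fun x => u x + v x) = RI u + RI v.
Proof.
move=> cu cv; rewrite -[RI u]mul1r -[RI v]mul1r -Rintegral_segmentDZ //.
by apply: eq_Rintegral => x _; rewrite !mul1r.
Qed.

Lemma Rintegral_segmentN u : continuous u -> RI (fun x => - u x) = - RI u.
Proof.
move=> cu; rewrite -[RHS]mulN1r -Rintegral_segmentZl //.
by apply: eq_Rintegral => x _; rewrite mulN1r.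
Qed.

Lemma Rintegral_segment_comp_opp u : - w <= w -> continuous u ->
  RI (fun x => u (- x)) = RI u.
Proof.
move=> ww cu; rewrite /Rintegral.
have := integration_by_substitution_oppr ww (continuous_subspaceT cu).
by rewrite opprK => ->.
Qed.

Lemma cintegralE f : cintegral w f = Complex (RI (fun x => Re (f x))) (RI (fun x => Im (f x))).
Proof.
by apply/eqP; rewrite eq_complex /= !(mul0r, mul1r, add0r, subr0, addr0) !eqxx.
Qed.

Lemma eq_cintegral f g : f =1 g -> cintegral w f = cintegral w g.
Proof. by move=> /funext->. Qed.

Lemma cintegralD f g : ccontinuous f -> ccontinuous g ->
  cintegral w (fun x => f x + g x) = cintegral w f + cintegral w g.
Proof.
move=> [fRe fIm] [gRe gIm]; rewrite !cintegralE /=; congr Complex;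
  rewrite -Rintegral_segmentD //; apply: eq_Rintegral => x _.
- exact: Re_addc.
- exact: Im_addc.
Qed.

Lemma cintegralN f : ccontinuous f -> cintegral w (fun x => - f x) = - cintegral w f.
Proof.
move=> [fRe fIm]; rewrite !cintegralE /=; congr Complex;
  rewrite -Rintegral_segmentN //; apply: eq_Rintegral => x _.
- exact: Re_oppc.
- exact: Im_oppc.
Qed.

Lemma cintegralZl (c : C) f : ccontinuous f ->
  cintegral w (fun x => c * f x) = c * cintegral w f.
Proof.
move=> [fRe fIm]; rewrite !cintegralE; case: c => a b /=; congr Complex.
- rewrite -mulNr -Rintegral_segmentDZ //.
  by apply: eq_Rintegral => x _; case: (f x) => p q /=; rewrite mulNr.
- rewrite addrC -Rintegral_segmentDZ //.
  by apply: eq_Rintegral => x _; case: (f x) => p q /=; rewrite addrC.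
Qed.

Lemma cintegralZr (c : C) f : ccontinuous f ->
  cintegral w (fun x => f x * c) = cintegral w f * c.
Proof.
by move=> cf; rewrite mulrC -cintegralZl //; apply: eq_cintegral => x; rewrite mulrC.
Qed.

Lemma cintegral_sum I (r : seq I) (P : pred I) (F : I -> R -> C) :
  (forall i, P i -> ccontinuous (F i)) ->
  cintegral w (fun x => \sum_(i <- r | P i) F i x) = \sum_(i <- r | P i) cintegral w (F i).
Proof.
move=> FP; elim: r => [|a r IHr].
  rewrite big_nil (@eq_cintegral _ (fun x => 0 * 0)); last by move=> x; rewrite big_nil mul0r.
  by rewrite cintegralZl ?mul0r //; exact: ccontinuous_cst.
rewrite big_cons; case Pa: (P a); last first.
  by rewrite -IHr; apply: eq_cintegral => x; rewrite big_cons Pa.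
rewrite -IHr -cintegralD; [|exact: FP|exact: ccontinuous_sum].
by apply: eq_cintegral => x; rewrite big_cons Pa.
Qed.

Lemma cintegralJ f : ccontinuous f -> cintegral w (fun x => conjc (f x)) = conjc (cintegral w f).
Proof.
move=> [fRe fIm]; rewrite !cintegralE /=; congr Complex.
- by apply: eq_Rintegral => x _; rewrite Re_conjc.
- by rewrite -Rintegral_segmentN //; apply: eq_Rintegral => x _; rewrite Im_conjc.
Qed.

Lemma cintegral_comp_opp f : - w <= w -> ccontinuous f ->
  cintegral w (fun x => f (- x)) = cintegral w f.
Proof.
move=> ww [fRe fIm]; rewrite !cintegralE.
by rewrite (Rintegral_segment_comp_opp ww fRe) (Rintegral_segment_comp_opp ww fIm).
Qed.

End SegmentIntegral.

Section ConjugateTranspose.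
Variable R : realType.
Local Notation C := R[i].

Definition conjm a b (X : 'M[C]_(a, b)) : 'M[C]_(a, b) := map_mx conjc X.

Lemma ctrM a b c (X : 'M[C]_(a, b)) (Y : 'M[C]_(b, c)) : ctr (X *m Y) = ctr Y *m ctr X.
Proof. by rewrite /ctr trmx_mul map_mxM. Qed.

Lemma ctrD a b (X Y : 'M[C]_(a, b)) : ctr (X + Y) = ctr X + ctr Y.
Proof. by rewrite /ctr raddfD /= map_mxD. Qed.

Lemma ctrN a b (X : 'M[C]_(a, b)) : ctr (- X) = - ctr X.
Proof. by rewrite /ctr raddfN /= map_mxN. Qed.

Lemma ctrB a b (X Y : 'M[C]_(a, b)) : ctr (X - Y) = ctr X - ctr Y.
Proof. by rewrite ctrD ctrN. Qed.

Lemma ctrZ a b (c : C) (X : 'M[C]_(a, b)) : ctr (c *: X) = conjc c *: ctr X.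
Proof. by apply/matrixP => i j; rewrite /ctr !mxE rmorphM. Qed.

Lemma ctr1 a : ctr (1%:M : 'M[C]_a) = 1%:M.
Proof. by rewrite /ctr tr_scalar_mx map_scalar_mx rmorph1. Qed.

Lemma ctrK a b (X : 'M[C]_(a, b)) : ctr (ctr X) = X.
Proof. by apply/matrixP => i j; rewrite /ctr !mxE conjcK. Qed.

Lemma ctr_sum a b I (r : seq I) (P : pred I) (F : I -> 'M[C]_(a, b)) :
  ctr (\sum_(i <- r | P i) F i) = \sum_(i <- r | P i) ctr (F i).
Proof.
apply/matrixP => i j; rewrite /ctr !mxE !summxE rmorph_sum.
by apply: eq_bigr => k _; rewrite !mxE.
Qed.

Lemma mxtrace_ctr a (X : 'M[C]_a) : \tr (ctr X) = conjc (\tr X).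
Proof. by rewrite /mxtrace rmorph_sum; apply: eq_bigr => i _; rewrite /ctr !mxE. Qed.

Lemma cmxM a b c (A : 'M[R]_(a, b)) (B : 'M[R]_(b, c)) : cmx (A *m B) = cmx A *m cmx B.
Proof. by rewrite /cmx map_mxM. Qed.

Lemma cmx_tr a b (A : 'M[R]_(a, b)) : cmx A^T = (cmx A)^T.
Proof. by rewrite /cmx map_trmx. Qed.

Lemma ctr_cmx a b (A : 'M[R]_(a, b)) : ctr (cmx A) = cmx A^T.
Proof. by apply/matrixP => i j; rewrite /ctr /cmx !mxE conjc_real. Qed.

Lemma conjmM a b c (X : 'M[C]_(a, b)) (Y : 'M[C]_(b, c)) :
  conjm (X *m Y) = conjm X *m conjm Y.
Proof. by rewrite /conjm map_mxM. Qed.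

Lemma conjmD a b (X Y : 'M[C]_(a, b)) : conjm (X + Y) = conjm X + conjm Y.
Proof. by rewrite /conjm map_mxD. Qed.

Lemma conjmZ a b (c : C) (X : 'M[C]_(a, b)) : conjm (c *: X) = conjc c *: conjm X.
Proof. by apply/matrixP => i j; rewrite /conjm !mxE rmorphM. Qed.

Lemma conjm_sum a b I (r : seq I) (P : pred I) (F : I -> 'M[C]_(a, b)) :
  conjm (\sum_(i <- r | P i) F i) = \sum_(i <- r | P i) conjm (F i).
Proof.
apply/matrixP => i j; rewrite /conjm !mxE !summxE rmorph_sum.
by apply: eq_bigr => k _; rewrite !mxE.
Qed.

Lemma conjm_cmx a b (A : 'M[R]_(a, b)) : conjm (cmx A) = cmx A.
Proof. by apply/matrixP => i j; rewrite /conjm /cmx !mxE conjc_real. Qed.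

Lemma conjm_ctr a b (X : 'M[C]_(a, b)) : conjm (ctr X) = ctr (conjm X).
Proof. by apply/matrixP => i j; rewrite /conjm /ctr !mxE. Qed.

Lemma mxtrace_conjm a (X : 'M[C]_a) : \tr (conjm X) = conjc (\tr X).
Proof. by rewrite /mxtrace rmorph_sum; apply: eq_bigr => i _; rewrite /conjm !mxE. Qed.

End ConjugateTranspose.

Lemma eigenvalueE (F : fieldType) n (X : 'M[F]_n) a :
  eigenvalue X a = (X - a%:M \notin unitmx).
Proof. by rewrite /eigenvalue /eigenspace kermx_eq0 row_free_unit. Qed.

Section Sylvester.
Variable R : realType.
Local Notation C := R[i].

(* [hurwitz A] unfolds to [hurwitzC (cmx A)]. *)
Definition hurwitzC n (X : 'M[C]_n) := forall l, eigenvalue X l -> Re l < 0.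

Lemma hurwitzC_tr n (X : 'M[C]_n) : hurwitzC X -> hurwitzC X^T.
Proof.
move=> hX l; rewrite eigenvalueE => XTl; apply: hX; rewrite eigenvalueE.
by rewrite -unitmx_tr raddfB /= tr_scalar_mx.
Qed.

(* [D A2 = (- A1) D] propagates to [D q(A2) = q(- A1) D]; taking for [q] the
   characteristic polynomial of [A2] kills the left side, while [q(- A1)] is
   invertible because the spectra of [A2] and [- A1] lie in opposite half-planes. *)
Lemma sylvester_eq0 n k (A1 : 'M[C]_n) (A2 : 'M[C]_k) (D : 'M[C]_(n, k)) :
  hurwitzC A1 -> hurwitzC A2 -> A1 *m D + D *m A2 = 0 -> D = 0.
Proof.
case: n A1 D => [|n] A1 D; first by move=> *; exact: flatmx0.
case: k A2 D => [|k] A2 D; first by move=> *; exact: thinmx0.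
move=> h1 h2 E.
have DA : D *m A2 = (- A1) *m D by apply/eqP; rewrite mulNmx -addr_eq0 addrC E.
have Dq (q : {poly C}) : D *m horner_mx A2 q = horner_mx (- A1) q *m D.
  elim/poly_ind: q => [|q c IHq]; first by rewrite !rmorph0 mulmx0 mul0mx.
  rewrite !rmorphD !rmorphM /= !horner_mx_X !horner_mx_C -!mulmxE.
  rewrite mulmxDr mulmxDl mulmxA IHq -!mulmxA DA.
  by rewrite mul_mx_scalar mul_scalar_mx.
have := Dq (char_poly A2); rewrite Cayley_Hamilton mulmx0 => /esym qD.
suff qA1_unit : horner_mx (- A1) (char_poly A2) \in unitmx.
  by rewrite -[D]mul1mx -(mulVmx qA1_unit) -mulmxA qD mulmx0.
have [r Er] := closed_field_poly_normal (char_poly A2).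
rewrite Er (monicP (char_poly_monic A2)) scale1r rmorph_prod big_seq.
apply: (big_ind (fun M : 'M[C]_n.+1 => M \in unitmx)) => [|M1 M2|z zr].
- exact: unitmx1.
- by rewrite -mulmxE unitmx_mul => ->.
have A2z : eigenvalue A2 z.
  rewrite eigenvalue_root_char Er rootZ ?root_prod_XsubC //.
  by rewrite (monicP (char_poly_monic A2)) oner_neq0.
have A1Nz : A1 - (- z)%:M \in unitmx.
  rewrite -[_ \in unitmx]negbK -eigenvalueE; apply/negP => /h1.
  by rewrite Re_oppc oppr_lt0 => /(lt_trans (h2 _ A2z)); rewrite ltxx.
rewrite rmorphB /= horner_mx_X horner_mx_C.
have -> : - A1 - z%:M = - (A1 - (- z)%:M) by rewrite raddfN /= opprK opprD.
by rewrite -scaleN1r unitmxZ ?unitfE ?oppr_eq0 ?oner_neq0.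
Qed.

Lemma sylvester_uniq n k (A1 : 'M[C]_n) (A2 : 'M[C]_k) (K Y1 Y2 : 'M[C]_(n, k)) :
  hurwitzC A1 -> hurwitzC A2 ->
  A1 *m Y1 + Y1 *m A2 + K = 0 -> A1 *m Y2 + Y2 *m A2 + K = 0 -> Y1 = Y2.
Proof.
move=> h1 h2 E1 E2; apply/eqP; rewrite -subr_eq0; apply/eqP.
apply: (sylvester_eq0 h1 h2); rewrite mulmxBr mulmxBl addrACA -opprD.
by apply/eqP; rewrite subr_eq0; apply/eqP/(addIr K); rewrite E1 E2.
Qed.

End Sylvester.

Lemma hurwitzC_cmx_tr (R : realType) n (A : 'M[R]_n) : hurwitz A -> hurwitzC (cmx A^T).
Proof. by rewrite cmx_tr; exact: hurwitzC_tr. Qed.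

Lemma conjc_jwD (R : realType) (x : R) : conjc (jw x) + jw x = 0.
Proof. by apply/eqP; rewrite eq_complex /= addr0 addNr !eqxx. Qed.

Section Resolvent.
Variables (R : realType) (n : nat) (A : 'M[R]_n).
Hypothesis hA : hurwitz A.
Local Notation C := R[i].

Lemma unitmx_resolvent (s : C) : Re s = 0 -> s%:M - cmx A \in unitmx.
Proof.
move=> s0; apply: contraT; rewrite -opprB -scaleN1r unitmxZ ?unitfE ?oppr_eq0 ?oner_neq0 //.
by rewrite -eigenvalueE => /hA; rewrite s0 ltxx.
Qed.

Lemma mul_cmx_resolvent (s : C) : Re s = 0 ->
  cmx A *m resolvent A s = s *: resolvent A s - 1%:M.
Proof.
move=> s0; have -> : cmx A = s%:M - (s%:M - cmx A) by rewrite opprB addrC subrK.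
by rewrite mulmxBl /resolvent mulmxV ?unitmx_resolvent // mul_scalar_mx.
Qed.

Lemma mul_resolvent_cmx (s : C) : Re s = 0 ->
  resolvent A s *m cmx A = s *: resolvent A s - 1%:M.
Proof.
move=> s0; have -> : cmx A = s%:M - (s%:M - cmx A) by rewrite opprB addrC subrK.
by rewrite mulmxBr /resolvent mulVmx ?unitmx_resolvent // mul_mx_scalar.
Qed.

Lemma mul_cmx_tr_ctr_resolvent (s : C) : Re s = 0 ->
  cmx A^T *m ctr (resolvent A s) = conjc s *: ctr (resolvent A s) - 1%:M.
Proof.
by move=> s0; rewrite -ctr_cmx -ctrM mul_resolvent_cmx // ctrB ctrZ ctr1.
Qed.

Lemma mul_ctr_resolvent_cmx_tr (s : C) : Re s = 0 ->
  ctr (resolvent A s) *m cmx A^T = conjc s *: ctr (resolvent A s) - 1%:M.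
Proof.
by move=> s0; rewrite -ctr_cmx -ctrM mul_cmx_resolvent // ctrB ctrZ ctr1.
Qed.

Lemma conjm_resolvent_jw (x : R) : conjm (resolvent A (jw x)) = resolvent A (jw (- x)).
Proof.
rewrite /conjm /resolvent map_invmx; congr invmx.
rewrite map_mxB /= -/(conjm _) -/(conjm _) conjm_cmx; congr (_ - _).
by apply/matrixP => i j; rewrite !mxE rmorphMn.
Qed.

End Resolvent.

Section MatrixContinuity.
Variable R : realType.
Local Notation C := R[i].

Definition mxcontinuous a b (F : R -> 'M[C]_(a, b)) :=
  forall i j, ccontinuous (fun x => F x i j).

Lemma eq_mxcontinuous a b (F G : R -> 'M[C]_(a, b)) :
  F =1 G -> mxcontinuous F -> mxcontinuous G.
Proof. by move=> /funext->. Qed.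

Lemma mxcontinuous_cst a b (X : 'M[C]_(a, b)) : mxcontinuous (fun=> X).
Proof. by move=> i j; exact: ccontinuous_cst. Qed.

Lemma mxcontinuousD a b (F G : R -> 'M[C]_(a, b)) :
  mxcontinuous F -> mxcontinuous G -> mxcontinuous (fun x => F x + G x).
Proof.
move=> cF cG i j; apply: (@eq_ccontinuous _ (fun x => F x i j + G x i j)).
  by move=> x; rewrite mxE.
exact: ccontinuousD.
Qed.

Lemma mxcontinuousN a b (F : R -> 'M[C]_(a, b)) :
  mxcontinuous F -> mxcontinuous (fun x => - F x).
Proof.
move=> cF i j; apply: (@eq_ccontinuous _ (fun x => - F x i j)); last exact: ccontinuousN.
by move=> x; rewrite mxE.
Qed.

Lemma mxcontinuousB a b (F G : R -> 'M[C]_(a, b)) :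
  mxcontinuous F -> mxcontinuous G -> mxcontinuous (fun x => F x - G x).
Proof. by move=> cF cG; apply: mxcontinuousD => //; exact: mxcontinuousN. Qed.

Lemma mxcontinuousM a b c (F : R -> 'M[C]_(a, b)) (G : R -> 'M[C]_(b, c)) :
  mxcontinuous F -> mxcontinuous G -> mxcontinuous (fun x => F x *m G x).
Proof.
move=> cF cG i j; apply: (@eq_ccontinuous _ (fun x => \sum_k F x i k * G x k j)).
  by move=> x; rewrite mxE.
by apply: ccontinuous_sum => k _; exact: ccontinuousM.
Qed.

Lemma mxcontinuousZ a b (c : R -> C) (F : R -> 'M[C]_(a, b)) :
  ccontinuous c -> mxcontinuous F -> mxcontinuous (fun x => c x *: F x).
Proof.
move=> cc cF i j; apply: (@eq_ccontinuous _ (fun x => c x * F x i j)); last exact: ccontinuousM.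
by move=> x; rewrite mxE.
Qed.

Lemma mxcontinuous_mull a b c (L : 'M[C]_(a, b)) (F : R -> 'M[C]_(b, c)) :
  mxcontinuous F -> mxcontinuous (fun x => L *m F x).
Proof. by move=> cF; apply: mxcontinuousM => //; exact: mxcontinuous_cst. Qed.

Lemma mxcontinuous_mulr a b c (F : R -> 'M[C]_(a, b)) (L : 'M[C]_(b, c)) :
  mxcontinuous F -> mxcontinuous (fun x => F x *m L).
Proof. by move=> cF; apply: mxcontinuousM => //; exact: mxcontinuous_cst. Qed.

Lemma mxcontinuous_scalar a (c : R -> C) :
  ccontinuous c -> mxcontinuous (fun x => (c x)%:M : 'M[C]_a).
Proof.
move=> cc i j; apply: (@eq_ccontinuous _ (fun x => c x * (i == j)%:R)).
  by move=> x; rewrite mxE mulr_natr.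
by apply: ccontinuousM => //; exact: ccontinuous_cst.
Qed.

Lemma mxcontinuous_ctr a b (F : R -> 'M[C]_(a, b)) :
  mxcontinuous F -> mxcontinuous (fun x => ctr (F x)).
Proof.
move=> cF i j; apply: (@eq_ccontinuous _ (fun x => conjc (F x j i))); last exact: ccontinuousJ.
by move=> x; rewrite /ctr !mxE.
Qed.

Lemma mxcontinuous_sum a b I (r : seq I) (P : pred I) (F : I -> R -> 'M[C]_(a, b)) :
  (forall i, P i -> mxcontinuous (F i)) ->
  mxcontinuous (fun x => \sum_(i <- r | P i) F i x).
Proof.
move=> FP i j; apply: (@eq_ccontinuous _ (fun x => \sum_(k <- r | P k) F k x i j)).
  by move=> x; rewrite summxE.
by apply: ccontinuous_sum => k Pk; exact: FP.
Qed.

Lemma ccontinuous_det a (F : R -> 'M[C]_a) :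
  mxcontinuous F -> ccontinuous (fun x => \det (F x)).
Proof.
move=> cF; apply: ccontinuous_sum => s _; apply: ccontinuousM; first exact: ccontinuous_cst.
by apply: ccontinuous_prod => i _; exact: cF.
Qed.

Lemma mxcontinuous_inv a (F : R -> 'M[C]_a) :
  (forall x, F x \in unitmx) -> mxcontinuous F -> mxcontinuous (fun x => invmx (F x)).
Proof.
case: a F => [|a] F F_unit cF i j; first by case: i.
apply: (@eq_ccontinuous _ (fun x => (\det (F x))^-1 * cofactor (F x) j i)).
  by move=> x; rewrite /invmx F_unit !mxE.
apply: ccontinuousM.
  apply: ccontinuousV; last exact: ccontinuous_det.
  by move=> x; rewrite -unitfE -unitmxE.
apply: ccontinuousM; first exact: ccontinuous_cst.
apply: ccontinuous_det => k l.
by apply: (@eq_ccontinuous _ (fun x => F x (lift j k) (lift i l))) => [x|]; rewrite ?mxE.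
Qed.

Lemma mxcontinuous_resolvent n (A : 'M[R]_n) :
  hurwitz A -> mxcontinuous (fun x => resolvent A (jw x)).
Proof.
move=> hA; apply: mxcontinuous_inv; first by move=> x; exact: unitmx_resolvent.
by apply: mxcontinuousB; [apply: mxcontinuous_scalar; exact: ccontinuous_jw
                        | exact: mxcontinuous_cst].
Qed.

End MatrixContinuity.

Section MatrixIntegral.
Variables (R : realType) (w : R).
Local Notation C := R[i].

Lemma eq_mxintegral a b (F G : R -> 'M[C]_(a, b)) : F =1 G ->
  mxintegral w F = mxintegral w G.
Proof. by move=> /funext->. Qed.

Lemma mxintegralD a b (F G : R -> 'M[C]_(a, b)) : mxcontinuous F -> mxcontinuous G ->
  mxintegral w (fun x => F x + G x) = mxintegral w F + mxintegral w G.
Proof.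
move=> cF cG; apply/matrixP => i j; rewrite !mxE -cintegralD //.
by apply: eq_cintegral => x; rewrite mxE.
Qed.

Lemma mxintegralN a b (F : R -> 'M[C]_(a, b)) : mxcontinuous F ->
  mxintegral w (fun x => - F x) = - mxintegral w F.
Proof.
move=> cF; apply/matrixP => i j; rewrite !mxE -cintegralN //.
by apply: eq_cintegral => x; rewrite mxE.
Qed.

Lemma mxintegralB a b (F G : R -> 'M[C]_(a, b)) : mxcontinuous F -> mxcontinuous G ->
  mxintegral w (fun x => F x - G x) = mxintegral w F - mxintegral w G.
Proof. by move=> cF cG; rewrite mxintegralD ?mxintegralN //; exact: mxcontinuousN. Qed.

Lemma mxintegralZ a b (c : C) (F : R -> 'M[C]_(a, b)) : mxcontinuous F ->
  mxintegral w (fun x => c *: F x) = c *: mxintegral w F.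
Proof.
move=> cF; apply/matrixP => i j; rewrite !mxE -cintegralZl //.
by apply: eq_cintegral => x; rewrite mxE.
Qed.

Lemma mxintegral_scale_cst a b (c : R -> C) (X : 'M[C]_(a, b)) : ccontinuous c ->
  mxintegral w (fun x => c x *: X) = cintegral w c *: X.
Proof.
move=> cc; apply/matrixP => i j; rewrite !mxE -cintegralZr //.
by apply: eq_cintegral => x; rewrite mxE.
Qed.

Lemma mxintegral_sum a b I (r : seq I) (P : pred I) (F : I -> R -> 'M[C]_(a, b)) :
  (forall i, P i -> mxcontinuous (F i)) ->
  mxintegral w (fun x => \sum_(i <- r | P i) F i x) = \sum_(i <- r | P i) mxintegral w (F i).
Proof.
move=> FP; apply/matrixP => i j; rewrite summxE mxE.
rewrite (@eq_cintegral _ _ _ (fun x => \sum_(k <- r | P k) F k x i j)); last first.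
  by move=> x; rewrite summxE.
rewrite cintegral_sum => [|k Pk]; last exact: FP.
by apply: eq_bigr => k _; rewrite mxE.
Qed.

Lemma mxintegral_mull a b c (L : 'M[C]_(a, b)) (F : R -> 'M[C]_(b, c)) :
  mxcontinuous F -> mxintegral w (fun x => L *m F x) = L *m mxintegral w F.
Proof.
move=> cF; apply/matrixP => i j; rewrite !mxE.
rewrite (@eq_cintegral _ _ _ (fun x => \sum_k L i k * F x k j)); last by move=> x; rewrite mxE.
rewrite cintegral_sum; last by move=> k _; apply: ccontinuousM => //; exact: ccontinuous_cst.
by apply: eq_bigr => k _; rewrite cintegralZl // mxE.
Qed.

Lemma mxintegral_mulr a b c (F : R -> 'M[C]_(a, b)) (L : 'M[C]_(b, c)) :
  mxcontinuous F -> mxintegral w (fun x => F x *m L) = mxintegral w F *m L.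
Proof.
move=> cF; apply/matrixP => i j; rewrite !mxE.
rewrite (@eq_cintegral _ _ _ (fun x => \sum_k F x i k * L k j)); last by move=> x; rewrite mxE.
rewrite cintegral_sum; last by move=> k _; apply: ccontinuousM => //; exact: ccontinuous_cst.
by apply: eq_bigr => k _; rewrite cintegralZr // mxE.
Qed.

Lemma mxintegral_ctr a b (F : R -> 'M[C]_(a, b)) : mxcontinuous F ->
  mxintegral w (fun x => ctr (F x)) = ctr (mxintegral w F).
Proof.
move=> cF; apply/matrixP => i j; rewrite /ctr !mxE -cintegralJ //.
by apply: eq_cintegral => x; rewrite !mxE.
Qed.

Lemma mxintegral_conjm a b (F : R -> 'M[C]_(a, b)) : mxcontinuous F ->
  mxintegral w (fun x => conjm (F x)) = conjm (mxintegral w F).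
Proof.
move=> cF; apply/matrixP => i j; rewrite /conjm !mxE -cintegralJ //.
by apply: eq_cintegral => x; rewrite !mxE.
Qed.

Lemma mxintegral_comp_opp a b (F : R -> 'M[C]_(a, b)) : - w <= w -> mxcontinuous F ->
  mxintegral w (fun x => F (- x)) = mxintegral w F.
Proof.
by move=> ww cF; apply/matrixP => i j; rewrite !mxE (cintegral_comp_opp ww (cF i j)).
Qed.

Lemma mxtrace_mxintegral a (F : R -> 'M[C]_a) : mxcontinuous F ->
  \tr (mxintegral w F) = cintegral w (fun x => \tr (F x)).
Proof.
move=> cF; rewrite /mxtrace cintegral_sum; last by move=> i _; exact: cF.
by apply: eq_bigr => i _; rewrite mxE.
Qed.

End MatrixIntegral.

Section IteratedIntegral.
Variables (R : realType) (w : R).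
Local Notation C := R[i].

Lemma mxintegral2E a b (F : R -> R -> 'M[C]_(a, b)) :
  mxintegral2 w F = mxintegral w (fun x1 => mxintegral w (F x1)).
Proof.
apply/matrixP => i j; rewrite !mxE /cintegral2.
by apply: eq_cintegral => x; rewrite mxE.
Qed.

(* Continuity of the inner integrand and of the inner integral is what makes
   the iterated integral additive. *)
Definition mxcontinuous2 a b (F : R -> R -> 'M[C]_(a, b)) :=
  (forall x1, mxcontinuous (F x1)) /\ mxcontinuous (fun x1 => mxintegral w (F x1)).

Lemma eq_mxcontinuous2 a b (F G : R -> R -> 'M[C]_(a, b)) :
  (forall x y, F x y = G x y) -> mxcontinuous2 F -> mxcontinuous2 G.
Proof. by move=> FG; have -> : G = F by apply/funext => x; apply/funext => y. Qed.

Lemma eq_mxintegral2 a b (F G : R -> R -> 'M[C]_(a, b)) :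
  (forall x y, F x y = G x y) -> mxintegral2 w F = mxintegral2 w G.
Proof. by move=> FG; have -> : G = F by apply/funext => x; apply/funext => y. Qed.

Lemma mxcontinuous2B a b (F G : R -> R -> 'M[C]_(a, b)) :
  mxcontinuous2 F -> mxcontinuous2 G -> mxcontinuous2 (fun x y => F x y - G x y).
Proof.
move=> [cF cIF] [cG cIG]; split=> [x1|]; first exact: mxcontinuousB.
apply: (eq_mxcontinuous _ (mxcontinuousB cIF cIG)) => x1.
by rewrite mxintegralB.
Qed.

Lemma mxcontinuous2_ctr a b (F : R -> R -> 'M[C]_(a, b)) :
  mxcontinuous2 F -> mxcontinuous2 (fun x y => ctr (F x y)).
Proof.
move=> [cF cIF]; split=> [x1|]; first exact: mxcontinuous_ctr.
apply: (eq_mxcontinuous _ (mxcontinuous_ctr cIF)) => x1.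
by rewrite mxintegral_ctr.
Qed.

Lemma mxintegral2B a b (F G : R -> R -> 'M[C]_(a, b)) :
  mxcontinuous2 F -> mxcontinuous2 G ->
  mxintegral2 w (fun x y => F x y - G x y) = mxintegral2 w F - mxintegral2 w G.
Proof.
move=> [cF cIF] [cG cIG]; rewrite !mxintegral2E -mxintegralB //.
by apply: eq_mxintegral => x1; rewrite mxintegralB.
Qed.

Lemma mxintegral2_ctr a b (F : R -> R -> 'M[C]_(a, b)) : mxcontinuous2 F ->
  mxintegral2 w (fun x y => ctr (F x y)) = ctr (mxintegral2 w F).
Proof.
move=> [cF cIF]; rewrite !mxintegral2E -mxintegral_ctr //.
by apply: eq_mxintegral => x1; rewrite mxintegral_ctr.
Qed.

Section Separation.
Variables (a b c d p : nat).
Variables (L : 'I_p -> R -> 'M[C]_(a, c)) (K : 'I_p -> R -> 'M[C]_(d, b)).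
Hypotheses (cL : forall i, mxcontinuous (L i)) (cK : forall i, mxcontinuous (K i)).

Let sandwich (V : 'M[C]_(c, d)) x := \sum_(i < p) L i x *m V *m K i x.

Let mxcontinuous_sandwich V : mxcontinuous (sandwich V).
Proof.
apply: mxcontinuous_sum => i _.
by apply: mxcontinuousM => //; apply: mxcontinuousM => //; exact: mxcontinuous_cst.
Qed.

Let sandwich_delta V x :
  sandwich V x = \sum_l \sum_k V l k *: sandwich (delta_mx l k) x.
Proof.
rewrite {1}[V]matrix_sum_delta /sandwich.
under eq_bigr do rewrite mulmx_sumr mulmx_suml.
rewrite exchange_big; apply: eq_bigr => l _.
under eq_bigr do rewrite mulmx_sumr mulmx_suml.
rewrite exchange_big; apply: eq_bigr => k _.
by rewrite scaler_sumr; apply: eq_bigr => i _; rewrite -scalemxAr -scalemxAl.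
Qed.

Let mxintegral_sandwich V :
  mxintegral w (sandwich V) = \sum_l \sum_k V l k *: mxintegral w (sandwich (delta_mx l k)).
Proof.
rewrite (eq_mxintegral _ (sandwich_delta V)) mxintegral_sum => [|l _]; last first.
  by apply: mxcontinuous_sum => k _; apply: mxcontinuousZ; first exact: ccontinuous_cst.
apply: eq_bigr => l _; rewrite mxintegral_sum => [|k _]; last first.
  by apply: mxcontinuousZ; first exact: ccontinuous_cst.
by apply: eq_bigr => k _; rewrite mxintegralZ.
Qed.

(* The inner integral is linear in the middle factor [U x1], which therefore
   integrates separately. *)
Lemma mxintegral2_sandwich (U : R -> 'M[C]_(c, d)) : mxcontinuous U ->
  mxcontinuous2 (fun x1 x2 => sandwich (U x1) x2) /\
  mxintegral2 w (fun x1 x2 => sandwich (U x1) x2) = mxintegral w (sandwich (mxintegral w U)).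
Proof.
move=> cU; have inner x1 := mxintegral_sandwich (U x1).
have cUdelta l k : mxcontinuous (fun x1 => U x1 l k *: mxintegral w (sandwich (delta_mx l k))).
  by apply: mxcontinuousZ; [exact: cU | exact: mxcontinuous_cst].
split; first split => [x1|]; first exact: mxcontinuous_sandwich.
  apply: (eq_mxcontinuous (fun x1 => esym (inner x1))).
  by apply: mxcontinuous_sum => l _; apply: mxcontinuous_sum => k _; exact: cUdelta.
rewrite mxintegral2E (eq_mxintegral _ inner) mxintegral_sandwich.
rewrite mxintegral_sum => [|l _]; last by apply: mxcontinuous_sum => k _; exact: cUdelta.
apply: eq_bigr => l _; rewrite mxintegral_sum => [|k _]; last exact: cUdelta.
by apply: eq_bigr => k _; rewrite mxintegral_scale_cst ?mxE.
Qed.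

End Separation.

End IteratedIntegral.

Definition gram2 (R : realType) m p (H K : 'I_p -> R -> R -> 'M[R[i]]_m) x1 x2 :=
  \sum_(i < p) ctr (H i x1 x2) *m K i x1 x2.

Section NormExpansion.
Variables (R : realType) (w : R) (m p : nat).
Local Notation C := R[i].
Variables (H1 K1 : R -> 'M[C]_(p, m)) (H2 K2 : 'I_p -> R -> R -> 'M[C]_m).
Hypotheses (cH1 : mxcontinuous H1) (cK1 : mxcontinuous K1).
Hypotheses (cHH : mxcontinuous2 w (gram2 H2 H2)) (cHK : mxcontinuous2 w (gram2 H2 K2)).
Hypothesis cKK : mxcontinuous2 w (gram2 K2 K2).

Let conjc_lin (c1 c2 : R) (x y : C) :
  conjc (c1%:C * x + c2%:C * y) = c1%:C * conjc x + c2%:C * conjc y.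
Proof.
by case: x y => [a b] [a' b']; apply/eqP; rewrite eq_complex /=; apply/andP; split; apply/eqP; ring.
Qed.

Let mxtrace_expand (c1 c2 : R) (a b d e f h : 'M[C]_m) :
  \tr (c1%:C *: (a - b - (ctr b - d)) + c2%:C *: (e - f - (ctr f - h))) =
  \tr (c1%:C *: a + c2%:C *: e)
  - (c1%:C * \tr b + c2%:C * \tr f + conjc (c1%:C * \tr b + c2%:C * \tr f))
  + \tr (c1%:C *: d + c2%:C *: h).
Proof.
rewrite !mxtraceD !mxtraceZ !mxtraceD !raddfN /= !mxtraceD !raddfN /= !mxtrace_ctr.
by rewrite conjc_lin; ring.
Qed.

Let ctr_sub_mul a b (X Y : 'M[C]_(a, b)) :
  ctr (X - Y) *m (X - Y) = ctr X *m X - ctr X *m Y - (ctr (ctr X *m Y) - ctr Y *m Y).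
Proof. by rewrite ctrB ctrM ctrK mulmxBl !mulmxBr opprB addrA. Qed.

Let mxintegral_ctr_sub_mul :
  mxintegral w (fun x => ctr (H1 x - K1 x) *m (H1 x - K1 x)) =
  mxintegral w (fun x => ctr (H1 x) *m H1 x) - mxintegral w (fun x => ctr (H1 x) *m K1 x)
  - (ctr (mxintegral w (fun x => ctr (H1 x) *m K1 x))
     - mxintegral w (fun x => ctr (K1 x) *m K1 x)).
Proof.
have cM (U V : R -> 'M[C]_(p, m)) : mxcontinuous U -> mxcontinuous V ->
    mxcontinuous (fun x => ctr (U x) *m V x).
  by move=> cU cV; apply: mxcontinuousM => //; exact: mxcontinuous_ctr.
have cHH1 := cM _ _ cH1 cH1; have cHK1 := cM _ _ cH1 cK1; have cKK1 := cM _ _ cK1 cK1.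
have cKH1 := mxcontinuous_ctr cHK1.
rewrite (eq_mxintegral _ (fun x => ctr_sub_mul (H1 x) (K1 x))).
rewrite (mxintegralB w (mxcontinuousB cHH1 cHK1) (mxcontinuousB cKH1 cKK1)).
rewrite (mxintegralB w cHH1 cHK1) (mxintegralB w cKH1 cKK1) (mxintegral_ctr w cHK1).
(* Closing with [done] instead would make it try to unfold the integrals. *)
reflexivity.
Qed.

Let mxintegral2_ctr_sub_mul :
  mxintegral2 w (fun x y => \sum_(i < p) ctr (H2 i x y - K2 i x y) *m (H2 i x y - K2 i x y)) =
  mxintegral2 w (gram2 H2 H2) - mxintegral2 w (gram2 H2 K2)
  - (ctr (mxintegral2 w (gram2 H2 K2)) - mxintegral2 w (gram2 K2 K2)).
Proof.
have ctr_gram x y : ctr (gram2 H2 K2 x y) = \sum_(i < p) ctr (K2 i x y) *m H2 i x y.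
  by rewrite ctr_sum; apply: eq_bigr => i _; rewrite ctrM ctrK.
rewrite (@eq_mxintegral2 _ _ _ _ _ (fun x y => gram2 H2 H2 x y - gram2 H2 K2 x y
    - (ctr (gram2 H2 K2 x y) - gram2 K2 K2 x y))); last first.
  move=> x y; rewrite ctr_gram /gram2 -!sumrB; apply: eq_bigr => i _.
  by rewrite ctr_sub_mul ctrM ctrK.
have cKH := mxcontinuous2_ctr cHK.
rewrite (mxintegral2B (mxcontinuous2B cHH cHK) (mxcontinuous2B cKH cKK)).
rewrite (mxintegral2B cHH cHK) (mxintegral2B cKH cKK) (mxintegral2_ctr cHK).
reflexivity.
Qed.

Lemma h2w_norm2B :
  h2w_norm2 w (fun x => H1 x - K1 x) (fun i x y => H2 i x y - K2 i x y)
  = h2w_norm2 w H1 H2 - (h2w_inner w H1 K1 H2 K2 + conjc (h2w_inner w H1 K1 H2 K2))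
    + h2w_norm2 w K1 K2.
Proof.
rewrite /h2w_norm2 mxintegral_ctr_sub_mul mxintegral2_ctr_sub_mul /h2w_inner.
rewrite -mxtrace_mxintegral; last by apply: mxcontinuousM => //; exact: mxcontinuous_ctr.
exact: mxtrace_expand.
Qed.

End NormExpansion.

Section SylvesterIntegral.
Variables (R : realType) (w : R).
Local Notation C := R[i].

(* Pointwise, the resolvent identities give
   [A1 (P X Q) + (P X Q) A2 = (f + g) P X Q - X Q - P X = - (X Q + P X)]. *)
Lemma sylvester_mxintegral n k (P : R -> 'M[C]_n) (Q : R -> 'M[C]_k)
    (A1 : 'M[C]_n) (A2 : 'M[C]_k) (X : 'M[C]_(n, k)) (f g : R -> C) (c : C) :
  mxcontinuous P -> mxcontinuous Q ->
  (forall x, A1 *m P x = f x *: P x - 1%:M) -> (forall x, Q x *m A2 = g x *: Q x - 1%:M) ->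
  (forall x, f x + g x = 0) ->
  let Y := c *: mxintegral w (fun x => P x *m X *m Q x) in
  A1 *m Y + Y *m A2 + ((c *: mxintegral w P) *m X + X *m (c *: mxintegral w Q)) = 0.
Proof.
move=> cP cQ AP QA fg Y.
pose K x := P x *m X *m Q x.
have cK : mxcontinuous K by apply: mxcontinuousM => //; exact: mxcontinuous_mulr.
have pointwise x : A1 *m K x + K x *m A2 = - (X *m Q x + P x *m X).
  have -> : A1 *m K x = f x *: K x - X *m Q x.
    by rewrite !mulmxA AP !mulmxBl !mul1mx -!scalemxAl.
  have -> : K x *m A2 = g x *: K x - P x *m X.
    by rewrite -!mulmxA QA !mulmxBr !mulmx1 -!scalemxAr !mulmxA.
  by rewrite addrACA -scalerDl fg scale0r add0r opprD.
have integrated : A1 *m mxintegral w K + mxintegral w K *m A2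
                  = - (X *m mxintegral w Q + mxintegral w P *m X).
  rewrite -mxintegral_mull // -mxintegral_mulr // -mxintegral_mull // -mxintegral_mulr //.
  rewrite -mxintegralD; [|exact: mxcontinuous_mull|exact: mxcontinuous_mulr].
  rewrite -mxintegralD; [|exact: mxcontinuous_mull|exact: mxcontinuous_mulr].
  rewrite -mxintegralN; last first.
    by apply: mxcontinuousD; [exact: mxcontinuous_mull|exact: mxcontinuous_mulr].
  exact: eq_mxintegral.
rewrite /Y -scalemxAr -scalemxAl -scalemxAl -scalemxAr -!scalerDr integrated.
by rewrite [X *m _ + _]addrC addNr scaler0.
Qed.

Lemma sylvester_conjm n k (A1 : 'M[C]_n) (A2 : 'M[C]_k) (K Y : 'M[C]_(n, k)) :
  hurwitzC A1 -> hurwitzC A2 -> conjm A1 = A1 -> conjm A2 = A2 -> conjm K = K ->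
  A1 *m Y + Y *m A2 + K = 0 -> conjm Y = Y.
Proof.
move=> h1 h2 rA1 rA2 rK E; apply: (sylvester_uniq h1 h2 _ E).
by rewrite -rA1 -rA2 -rK -!conjmM -!conjmD E /conjm map_mx0.
Qed.

Lemma conjm_Fw n (A : 'M[R]_n) : hurwitz A -> - w <= w -> conjm (Fw w A) = Fw w A.
Proof.
move=> hA ww; have cR := mxcontinuous_resolvent hA.
rewrite /Fw conjmZ conjc_real -mxintegral_conjm //; congr (_ *: _).
rewrite (eq_mxintegral _ (conjm_resolvent_jw A)).
exact: (mxintegral_comp_opp (F := fun x => resolvent A (jw x))).
Qed.

Local Notation c1 := (((2 * pi)^-1)%:C : C).

Lemma ctr_Fw n (A : 'M[R]_n) : hurwitz A ->
  ctr (Fw w A) = c1 *: mxintegral w (fun x => ctr (resolvent A (jw x))).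
Proof.
by move=> hA; rewrite /Fw ctrZ conjc_real mxintegral_ctr //; exact: mxcontinuous_resolvent.
Qed.

Lemma sylvester_resolvent n k (A : 'M[R]_n) (Ak : 'M[R]_k) (X Y : 'M[C]_(n, k)) :
  hurwitz A -> hurwitz Ak ->
  cmx A^T *m Y + Y *m cmx Ak + (ctr (Fw w A) *m X + X *m Fw w Ak) = 0 ->
  Y = c1 *: mxintegral w (fun x => ctr (resolvent A (jw x)) *m X *m resolvent Ak (jw x)).
Proof.
move=> hA hAk EY; apply: (sylvester_uniq (hurwitzC_cmx_tr hA) hAk EY).
rewrite ctr_Fw //; apply: sylvester_mxintegral (conjc_jwD (R := R)).
- by apply: mxcontinuous_ctr; exact: mxcontinuous_resolvent.
- exact: mxcontinuous_resolvent.
- by move=> x; exact: mul_cmx_tr_ctr_resolvent.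
- by move=> x; exact: mul_resolvent_cmx.
Qed.

Lemma sylvester_resolvent_ctr n k (A : 'M[R]_n) (Ak : 'M[R]_k) (X P : 'M[C]_(n, k)) :
  hurwitz A -> hurwitz Ak ->
  cmx A *m P + P *m cmx Ak^T + (Fw w A *m X + X *m ctr (Fw w Ak)) = 0 ->
  P = c1 *: mxintegral w (fun x => resolvent A (jw x) *m X *m ctr (resolvent Ak (jw x))).
Proof.
move=> hA hAk EP; apply: (sylvester_uniq hA (hurwitzC_cmx_tr hAk) EP).
rewrite ctr_Fw //; apply: sylvester_mxintegral (fun x => etrans (addrC _ _) (conjc_jwD x)).
- exact: mxcontinuous_resolvent.
- by apply: mxcontinuous_ctr; exact: mxcontinuous_resolvent.
- by move=> x; exact: mul_cmx_resolvent.
- by move=> x; exact: mul_ctr_resolvent_cmx_tr.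
Qed.

End SylvesterIntegral.

Section TransferFunctions.
Variables (R : realType) (w : R) (na nb m p : nat).
Variables (Aa : 'M[R]_na) (Ba : 'M[R]_(na, m)) (Ca : 'M[R]_(p, na)) (Ma : 'I_p -> 'M[R]_na).
Variables (Ab : 'M[R]_nb) (Bb : 'M[R]_(nb, m)) (Cb : 'M[R]_(p, nb)) (Mb : 'I_p -> 'M[R]_nb).
Hypotheses (hAa : hurwitz Aa) (hAb : hurwitz Ab).
Local Notation C := R[i].

Lemma mxcontinuous_tf1 : mxcontinuous (fun x => tf1 Aa Ba Ca (jw x)).
Proof. by apply: mxcontinuous_mulr; apply: mxcontinuous_mull; exact: mxcontinuous_resolvent. Qed.

Lemma ctr_tf1_mul (s : C) :
  ctr (tf1 Aa Ba Ca s) *m tf1 Ab Bb Cb s =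
  cmx Ba^T *m (ctr (resolvent Aa s) *m cmx (Ca^T *m Cb) *m resolvent Ab s) *m cmx Bb.
Proof. by rewrite /tf1 !ctrM !ctr_cmx cmxM !mulmxA. Qed.

Lemma ctr_tf2_mul i (s1 s2 : C) : (Ma i)^T = Ma i ->
  ctr (tf2 Aa Ba Ma i s1 s2) *m tf2 Ab Bb Mb i s1 s2 =
  (cmx Ba^T *m ctr (resolvent Aa s2) *m cmx (Ma i))
  *m (resolvent Aa s1 *m cmx (Ba *m Bb^T) *m ctr (resolvent Ab s1))
  *m (cmx (Mb i) *m resolvent Ab s2 *m cmx Bb).
Proof. by move=> MaS; rewrite /tf2 !ctrM !ctr_cmx ctrK trmxK MaS cmxM !mulmxA. Qed.

Lemma mxintegral2_gram2_tf2 : (forall i, (Ma i)^T = Ma i) ->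
  let Ga i x1 x2 := tf2 Aa Ba Ma i (jw x1) (jw x2) in
  let Gb i x1 x2 := tf2 Ab Bb Mb i (jw x1) (jw x2) in
  mxcontinuous2 w (gram2 Ga Gb) /\
  mxintegral2 w (gram2 Ga Gb) =
  mxintegral w (fun x2 => \sum_(i < p)
    (cmx Ba^T *m ctr (resolvent Aa (jw x2)) *m cmx (Ma i))
    *m mxintegral w (fun x1 => resolvent Aa (jw x1) *m cmx (Ba *m Bb^T) *m ctr (resolvent Ab (jw x1)))
    *m (cmx (Mb i) *m resolvent Ab (jw x2) *m cmx Bb)).
Proof.
move=> MaS Ga Gb; have cRa := mxcontinuous_resolvent hAa; have cRb := mxcontinuous_resolvent hAb.
have gramE x1 x2 : gram2 Ga Gb x1 x2 = \sum_(i < p)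
    (cmx Ba^T *m ctr (resolvent Aa (jw x2)) *m cmx (Ma i))
    *m (resolvent Aa (jw x1) *m cmx (Ba *m Bb^T) *m ctr (resolvent Ab (jw x1)))
    *m (cmx (Mb i) *m resolvent Ab (jw x2) *m cmx Bb).
  by apply: eq_bigr => i _; rewrite ctr_tf2_mul.
pose L i x2 := cmx Ba^T *m ctr (resolvent Aa (jw x2)) *m cmx (Ma i).
pose K i x2 := cmx (Mb i) *m resolvent Ab (jw x2) *m cmx Bb.
pose U x1 := resolvent Aa (jw x1) *m cmx (Ba *m Bb^T) *m ctr (resolvent Ab (jw x1)).
have cL i : mxcontinuous (L i).
  by apply: mxcontinuous_mulr; apply: mxcontinuous_mull; exact: mxcontinuous_ctr.
have cK i : mxcontinuous (K i) by apply: mxcontinuous_mulr; exact: mxcontinuous_mull.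
have cU : mxcontinuous U.
  by apply: mxcontinuousM; [exact: mxcontinuous_mulr | exact: mxcontinuous_ctr].
have [cLUK intLUK] := mxintegral2_sandwich w cL cK cU.
split; first exact: (eq_mxcontinuous2 (fun x y => esym (gramE x y)) cLUK).
by rewrite (eq_mxintegral2 _ gramE).
Qed.

End TransferFunctions.

Section LQO.
Variables (R : realType) (n k m p : nat).
Variables (A : 'M[R]_n) (B : 'M[R]_(n, m)) (Cm : 'M[R]_(p, n)) (M : 'I_p -> 'M[R]_n).
Variables (Ak : 'M[R]_k) (Bk : 'M[R]_(k, m)) (Ck : 'M[R]_(p, k)) (Mk : 'I_p -> 'M[R]_k).
Variables (w : R) (P12 Y12 Z12 : 'M[R[i]]_(n, k)).
Hypotheses (w_gt0 : 0 < w) (hA : hurwitz A) (hAk : hurwitz Ak) (MS : forall i, (M i)^T = M i).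
Hypothesis EP : cmx A *m P12 + P12 *m cmx Ak^T
  + Fw w A *m cmx (B *m Bk^T) + cmx (B *m Bk^T) *m ctr (Fw w Ak) = 0.
Hypothesis EY : cmx A^T *m Y12 + Y12 *m cmx Ak
  + ctr (Fw w A) *m cmx (Cm^T *m Ck) + cmx (Cm^T *m Ck) *m Fw w Ak = 0.
Hypothesis EZ : cmx A^T *m Z12 + Z12 *m cmx Ak
  + \sum_(i < p) (ctr (Fw w A) *m cmx (M i) *m P12 *m cmx (Mk i)
                  + cmx (M i) *m P12 *m cmx (Mk i) *m Fw w Ak) = 0.
Local Notation C := R[i].
Local Notation c1 := (((2 * pi)^-1)%:C : C).
Local Notation G1 := (fun nu => tf1 A B Cm (jw nu)).
Local Notation Gk1 := (fun nu => tf1 Ak Bk Ck (jw nu)).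
Local Notation G2 := (fun i nu1 nu2 => tf2 A B M i (jw nu1) (jw nu2)).
Local Notation Gk2 := (fun i nu1 nu2 => tf2 Ak Bk Mk i (jw nu1) (jw nu2)).

Let XZ := \sum_(i < p) cmx (M i) *m P12 *m cmx (Mk i).

Let EZ_sylvester :
  cmx A^T *m Z12 + Z12 *m cmx Ak + (ctr (Fw w A) *m XZ + XZ *m Fw w Ak) = 0.
Proof.
rewrite -[RHS]EZ big_split /= mulmx_sumr mulmx_suml /XZ.
by congr (_ + (_ + _)); apply: eq_bigr => i _; rewrite !mulmxA.
Qed.

Let Y12E : Y12 = c1 *: mxintegral w
  (fun x => ctr (resolvent A (jw x)) *m cmx (Cm^T *m Ck) *m resolvent Ak (jw x)).
Proof. by apply: sylvester_resolvent => //; rewrite addrA. Qed.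

Let P12E : P12 = c1 *: mxintegral w
  (fun x => resolvent A (jw x) *m cmx (B *m Bk^T) *m ctr (resolvent Ak (jw x))).
Proof. by apply: sylvester_resolvent_ctr => //; rewrite addrA. Qed.

Let Z12E : Z12 = c1 *: mxintegral w
  (fun x => ctr (resolvent A (jw x)) *m XZ *m resolvent Ak (jw x)).
Proof. exact: sylvester_resolvent EZ_sylvester. Qed.

Let ww : - w <= w.
Proof. by rewrite (@le_trans _ _ 0) // ?oppr_le0 ltW. Qed.

Let conjm_sylvester_rhs n' k' (A' : 'M[R]_n') (Ak' : 'M[R]_k') (X : 'M[C]_(n', k')) :
  hurwitz A' -> hurwitz Ak' -> conjm X = X ->
  conjm (ctr (Fw w A') *m X + X *m Fw w Ak') = ctr (Fw w A') *m X + X *m Fw w Ak'.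
Proof. by move=> hA' hAk' rX; rewrite conjmD !conjmM conjm_ctr !conjm_Fw ?rX. Qed.

Let conjm_P12 : conjm P12 = P12.
Proof.
apply: (sylvester_conjm hA (hurwitzC_cmx_tr hAk) (conjm_cmx _) (conjm_cmx _)
  (K := Fw w A *m cmx (B *m Bk^T) + cmx (B *m Bk^T) *m ctr (Fw w Ak))).
- by rewrite conjmD !conjmM conjm_ctr !conjm_Fw ?conjm_cmx.
- by rewrite addrA.
Qed.

Let conjm_Y12 : conjm Y12 = Y12.
Proof.
apply: (sylvester_conjm (hurwitzC_cmx_tr hA) hAk (conjm_cmx _) (conjm_cmx _)
  (K := ctr (Fw w A) *m cmx (Cm^T *m Ck) + cmx (Cm^T *m Ck) *m Fw w Ak)).
- exact/conjm_sylvester_rhs/conjm_cmx.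
- by rewrite addrA.
Qed.

Let conjm_Z12 : conjm Z12 = Z12.
Proof.
apply: (sylvester_conjm (hurwitzC_cmx_tr hA) hAk (conjm_cmx _) (conjm_cmx _) _ EZ_sylvester).
apply: conjm_sylvester_rhs => //; rewrite /XZ conjm_sum; apply: eq_bigr => i _.
by rewrite !conjmM !conjm_cmx conjm_P12.
Qed.

Let integral_tf1 : cintegral w (fun nu => \tr (ctr (G1 nu) *m Gk1 nu)) =
  \tr (cmx B^T *m mxintegral w (fun x =>
    ctr (resolvent A (jw x)) *m cmx (Cm^T *m Ck) *m resolvent Ak (jw x)) *m cmx Bk).
Proof.
have cRA := mxcontinuous_resolvent hA; have cRAk := mxcontinuous_resolvent hAk.
rewrite -mxtrace_mxintegral; last first.
  by apply: mxcontinuousM; [apply: mxcontinuous_ctr|]; exact: mxcontinuous_tf1.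
rewrite (eq_mxintegral _ (fun x => ctr_tf1_mul A B Cm Ak Bk Ck (jw x))).
have cW : mxcontinuous (fun x =>
    ctr (resolvent A (jw x)) *m cmx (Cm^T *m Ck) *m resolvent Ak (jw x)).
  by apply: mxcontinuousM => //; apply: mxcontinuous_mulr; exact: mxcontinuous_ctr.
by rewrite mxintegral_mulr ?mxintegral_mull //; exact: mxcontinuous_mull.
Qed.

Let integral2_tf2 : c1 *: mxintegral w (fun x2 => \sum_(i < p)
    (cmx B^T *m ctr (resolvent A (jw x2)) *m cmx (M i))
    *m mxintegral w (fun x1 => resolvent A (jw x1) *m cmx (B *m Bk^T) *m ctr (resolvent Ak (jw x1)))
    *m (cmx (Mk i) *m resolvent Ak (jw x2) *m cmx Bk))
  = cmx B^T *m mxintegral w (fun x =>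
      ctr (resolvent A (jw x)) *m XZ *m resolvent Ak (jw x)) *m cmx Bk.
Proof.
have cRA := mxcontinuous_resolvent hA; have cRAk := mxcontinuous_resolvent hAk.
have cW : mxcontinuous (fun x => ctr (resolvent A (jw x)) *m XZ *m resolvent Ak (jw x)).
  by apply: mxcontinuousM => //; apply: mxcontinuous_mulr; exact: mxcontinuous_ctr.
rewrite -mxintegralZ; last first.
  apply: mxcontinuous_sum => i _; apply: mxcontinuousM; last first.
    by apply: mxcontinuous_mulr; exact: mxcontinuous_mull.
  by apply: mxcontinuous_mulr; apply: mxcontinuous_mulr; apply: mxcontinuous_mull;
    exact: mxcontinuous_ctr.
rewrite -mxintegral_mull // -mxintegral_mulr; last exact: mxcontinuous_mull.
apply: eq_mxintegral => x; rewrite scaler_sumr /XZ !(mulmx_sumr, mulmx_suml).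
by apply: eq_bigr => i _; rewrite scalemxAl scalemxAr -P12E !mulmxA.
Qed.

Lemma h2w_inner_lqo : h2w_inner w G1 Gk1 G2 Gk2 = \tr (cmx B^T *m (Y12 + Z12) *m cmx Bk).
Proof.
have c2E : (((2 * pi) ^+ 2)^-1)%:C = c1 * c1 :> C.
  rewrite -exprVn expr2; apply/eqP; rewrite eq_complex /=.
  by apply/andP; split; apply/eqP; ring.
rewrite /h2w_inner; have [_ ->] := mxintegral2_gram2_tf2 w B Bk Mk hA hAk MS.
have BYB : cmx B^T *m Y12 *m cmx Bk = c1 *: (cmx B^T *m mxintegral w (fun x =>
    ctr (resolvent A (jw x)) *m cmx (Cm^T *m Ck) *m resolvent Ak (jw x)) *m cmx Bk).
  by rewrite Y12E scalemxAl scalemxAr.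
have BZB : cmx B^T *m Z12 *m cmx Bk = c1 *: (cmx B^T *m mxintegral w (fun x =>
    ctr (resolvent A (jw x)) *m XZ *m resolvent Ak (jw x)) *m cmx Bk).
  by rewrite Z12E scalemxAl scalemxAr.
rewrite integral_tf1 c2E -mulrA -!mxtraceZ integral2_tf2 -mxtraceD.
by rewrite mulmxDr mulmxDl BYB BZB.
Qed.

Lemma conjc_h2w_inner_lqo : conjc (h2w_inner w G1 Gk1 G2 Gk2) = h2w_inner w G1 Gk1 G2 Gk2.
Proof.
by rewrite h2w_inner_lqo -mxtrace_conjm !conjmM conjmD conjm_Y12 conjm_Z12 !conjm_cmx.
Qed.

End LQO.

Theorem corollary1 (R : realType) (n k m p : nat)
  (A : 'M[R]_n) (B : 'M[R]_(n, m)) (Cm : 'M[R]_(p, n)) (M : 'I_p -> 'M[R]_n)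
  (Ak : 'M[R]_k) (Bk : 'M[R]_(k, m)) (Ck : 'M[R]_(p, k)) (Mk : 'I_p -> 'M[R]_k)
  (w : R) (P12 Y12 Z12 : 'M[R[i]]_(n, k)) :
  0 < w ->
  hurwitz A -> hurwitz Ak ->
  (forall i, (M i)^T = M i) -> (forall i, (Mk i)^T = Mk i) ->
  cmx A *m P12 + P12 *m cmx Ak^T
    + Fw w A *m cmx (B *m Bk^T) + cmx (B *m Bk^T) *m ctr (Fw w Ak) = 0 ->
  cmx A^T *m Y12 + Y12 *m cmx Ak
    + ctr (Fw w A) *m cmx (Cm^T *m Ck) + cmx (Cm^T *m Ck) *m Fw w Ak = 0 ->
  cmx A^T *m Z12 + Z12 *m cmx Ak
    + \sum_(i < p) (ctr (Fw w A) *m cmx (M i) *m P12 *m cmx (Mk i)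
                    + cmx (M i) *m P12 *m cmx (Mk i) *m Fw w Ak) = 0 ->
  let G1  := fun nu : R => tf1 A B Cm (jw nu) in
  let G2  := fun (i : 'I_p) (nu1 nu2 : R) => tf2 A B M i (jw nu1) (jw nu2) in
  let Gk1 := fun nu : R => tf1 Ak Bk Ck (jw nu) in
  let Gk2 := fun (i : 'I_p) (nu1 nu2 : R) => tf2 Ak Bk Mk i (jw nu1) (jw nu2) in
  let Q12 := Y12 + Z12 in
  h2w_norm2 w (fun nu => G1 nu - Gk1 nu) (fun i nu1 nu2 => G2 i nu1 nu2 - Gk2 i nu1 nu2)
    = h2w_norm2 w G1 G2 - 2 * h2w_inner w G1 Gk1 G2 Gk2 + h2w_norm2 w Gk1 Gk2
  /\ h2w_inner w G1 Gk1 G2 Gk2 = \tr (cmx B^T *m (Y12 + Z12) *m cmx Bk)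
  /\ h2w_inner w G1 Gk1 G2 Gk2 = \tr (cmx B^T *m Q12 *m cmx Bk).
Proof.
move=> w_gt0 hA hAk MS MkS EP EY EZ G1 G2 Gk1 Gk2 Q12.
have inner := h2w_inner_lqo hA hAk MS EP EY EZ.
split; last by split.
have [cGG _] := mxintegral2_gram2_tf2 w B B M hA hA MS.
have [cGGk _] := mxintegral2_gram2_tf2 w B Bk Mk hA hAk MS.
have [cGkGk _] := mxintegral2_gram2_tf2 w Bk Bk Mk hAk hAk MkS.
rewrite (h2w_norm2B (mxcontinuous_tf1 B Cm hA) (mxcontinuous_tf1 Bk Ck hAk) cGG cGGk cGkGk).
by rewrite (conjc_h2w_inner_lqo w_gt0 hA hAk MS EP EY EZ) -mulr2n mulr_natl.
Qed.
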